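(* Let $\lambda>0$ and $\delta\in(0,1)$, and let $\mathsf{T}$ be a fixed plane tree with $i\ge 1$ vertices. For each sufficiently large $k$, let $\ell=\lceil\lambda k\rceil$ and $d=\lceil\delta\lambda k\rceil$. Choose uniformly at random a plane tree with $\ell$ vertices whose root has degree $d$. Let $\beta_k(\mathsf{T})$ be the number of its principal subtrees that are isomorphic to $\mathsf{T}$, divided by $d$. Then $\beta_k(\mathsf{T})$ is concentrated at $$\mu_\beta(\mathsf{T})=\frac{(1-\delta)^{i-1}}{(2-\delta)^{2i-1}}.$$
   Context: A plane tree is a rooted tree in which the children of each vertex are linearly ordered. The principal subtrees of a rooted tree are the subtrees rooted at the children of the root; isomorphism is isomorphism of plane trees. A sequence of random variables $(\xi_k)$ is concentrated at a constant $\mu$ if for every $\varepsilon>0$ there is $K$ such that $\mathbb{P}[|\xi_k-\mu|\le\varepsilon]>1-\varepsilon$ for all $k\ge K$. *)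

From HB Require Import structures.
From mathcomp Require Import all_boot.
From Stdlib Require Import Reals.

Set Implicit Arguments.
Unset Strict Implicit.
Unset Printing Implicit Defensive.

(* Plane trees: a vertex with a linearly ordered list of children.
   Isomorphism of plane trees is equality of this representation. *)
Inductive ptree : Type := Node of seq ptree.

Definition children (t : ptree) : seq ptree := let: Node ts := t in ts.

Definition root_deg (t : ptree) : nat := size (children t).

Fixpoint nverts (t : ptree) : nat :=
  let: Node ts := t in (sumn (map nverts ts)).+1.

Definition ptree_ind' (P : ptree -> Prop)
  (H : forall ts, (forall t, List.In t ts -> P t) -> P (Node ts)) :
  forall t, P t :=
  fix f t := match t with
  | Node ts => H ts
      ((fix g (ts : seq ptree) : forall t, List.In t ts -> P t :=
          match ts with
          | nil => fun _ Hin => False_ind _ Hin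
          | cons x xs => fun t Hin =>
              match Hin with
              | or_introl e => eq_ind x P (f x) t e
              | or_intror h => g xs t h
              end
          end) ts)
  end.

Fixpoint ptree_enc (t : ptree) : GenTree.tree unit :=
  let: Node ts := t in GenTree.Node 0 (map ptree_enc ts).

Fixpoint ptree_dec (g : GenTree.tree unit) : ptree :=
  match g with
  | GenTree.Leaf _ => Node [::]
  | GenTree.Node _ gs => Node (map ptree_dec gs)
  end.

Lemma ptree_encK : cancel ptree_enc ptree_dec.
Proof.
elim/ptree_ind' => ts IH /=; congr Node.
elim: ts IH => [|x xs IHxs] IH //=.
rewrite IH; last by left.
by rewrite IHxs // => t Ht; apply: IH; right.
Qed.

HB.instance Definition _ := Countable.copy ptree (can_type ptree_encK).

Definition Rceil (x : R) : Z := (- Int_part (- x))%Z.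

Definition Rleb (x y : R) : bool := if Rle_dec x y then true else false.

Definition ell_of (lambda : R) (k : nat) : nat :=
  Z.to_nat (Rceil (lambda * INR k)).
Definition deg_of (lambda delta : R) (k : nat) : nat :=
  Z.to_nat (Rceil (delta * lambda * INR k)).

Definition beta (d : nat) (T t : ptree) : R :=
  INR (count (pred1 T) (children t)) / INR d.

Definition mu_beta (delta : R) (i : nat) : R :=
  ((1 - delta) ^ (i - 1)) / ((2 - delta) ^ (2 * i - 1)).

(* A plane tree with n.+1 vertices and root degree d is a root above a forest
   of d plane trees with n vertices in all, and there are
   F(n, d) = d (2n-d-1)! / (n! (n-d)!) such forests. Let X count the trees of
   the forest equal to T, which has i vertices. Fixing T at one, resp. two, of
   the d positions shows that X sums to d F(n-i, d-1) over all forests and X^2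
   to d F(n-i, d-1) + d (d-1) F(n-2i, d-2). For n ~ lambda k and
   d ~ delta lambda k, the ratios F(n-i, d-1) / F(n, d) and
   F(n-2i, d-2) / F(n, d) are quotients of falling factorials tending to mu
   and mu^2, so the mean of (X/d - mu)^2 tends to 0 and Chebyshev's inequality
   gives the concentration. *)

From HB Require Import structures.
From mathcomp Require Import all_boot zify.
From Stdlib Require Import Reals ZArith Lra Lia.
From Coquelicot Require Import Coquelicot.

Set Implicit Arguments.
Unset Strict Implicit.
Unset Printing Implicit Defensive.

(* Coquelicot opens R_scope and shadows [iota]. *)
Local Open Scope nat_scope.

Definition forest_size (f : seq ptree) : nat := sumn (map nverts f).

(* A forest of d.+1 trees with n.+1 vertices is cut into its first tree, a
   root with m principal subtrees, and d further trees; deleting that root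
   leaves a forest of d + m trees with n vertices. *)
Fixpoint forests (n d : nat) {struct n} : seq (seq ptree) :=
  match n, d with
  | 0, 0 => [:: [::]]
  | 0, _.+1 | _.+1, 0 => [::]
  | n'.+1, d'.+1 =>
      [seq Node (take m g) :: drop m g | m <- seq.iota 0 n'.+1, g <- forests n' (d' + m)]
  end.

Lemma forestsSS n d : forests n.+1 d.+1 =
  [seq Node (take m g) :: drop m g | m <- seq.iota 0 n.+1, g <- forests n (d + m)].
Proof. by []. Qed.

Lemma nverts_gt0 t : 0 < nverts t.
Proof. by case: t. Qed.

Lemma forest_size_cons t f : forest_size (t :: f) = nverts t + forest_size f.
Proof. by []. Qed.

Lemma forest_size_cat f g : forest_size (f ++ g) = forest_size f + forest_size g.
Proof. by rewrite /forest_size map_cat sumn_cat. Qed.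

Lemma size_le_forest_size f : size f <= forest_size f.
Proof.
elim: f => //= t f IH; rewrite forest_size_cons.
by rewrite -add1n leq_add // nverts_gt0.
Qed.

Lemma mem_forests n d f :
  (f \in forests n d) = (size f == d) && (forest_size f == n).
Proof.
elim: n d f => [|n IH] [|d] f.
- by rewrite inE; case: f.
- rewrite in_nil; case: (size f =P d.+1) => //= Hs.
  by apply/esym/negbTE; rewrite -lt0n (leq_trans _ (size_le_forest_size f)) ?Hs.
- by rewrite in_nil; case: f.
rewrite forestsSS; apply/idP/idP.
- case/flatten_mapP=> m _ /mapP [g].
  rewrite IH => /andP [/eqP Hsg /eqP Htg] ->.
  have Hmg : m <= size g by rewrite Hsg leq_addl.
  rewrite /= size_drop Hsg addnK eqxx /= forest_size_cons /= addSn.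
  by rewrite -/(forest_size (take m g)) -forest_size_cat cat_take_drop Htg.
- case: f => [|[c] r] // /andP [/eqP [Hs]].
  rewrite forest_size_cons [nverts _]/= -/(forest_size c) addSn eqSS => /eqP Hc.
  apply/flatten_mapP; exists (size c).
    rewrite mem_iota ltnS (leq_trans (size_le_forest_size c)) // -Hc.
    exact: leq_addr.
  apply/mapP; exists (c ++ r); last by rewrite take_size_cat // drop_size_cat.
  by rewrite IH size_cat Hs addnC eqxx forest_size_cat Hc eqxx.
Qed.

Lemma uniq_flatten_map (S T : eqType) (h : S -> seq T) (key : T -> S) ms :
  uniq ms -> (forall m, uniq (h m)) -> (forall m x, x \in h m -> key x = m) ->
  uniq (flatten (map h ms)).
Proof.
move=> Hms Hh Hkey; elim: ms Hms => //= m ms IH /andP [Hm Hms].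
rewrite cat_uniq Hh IH // andbT; apply/hasPn => x Hx; apply/negP => Hxm.
have [m' Hm' Hxm'] := flatten_mapP Hx.
by move: Hm; rewrite -(Hkey _ _ Hxm) (Hkey _ _ Hxm') Hm'.
Qed.

Lemma uniq_forests n d : uniq (forests n d).
Proof.
elim: n d => [|n IH] [|d] //; rewrite forestsSS.
pose root_deg_head (f : seq ptree) := if f is t :: _ then root_deg t else 0.
apply: (uniq_flatten_map (key := root_deg_head)); first exact: iota_uniq.
- move=> m; rewrite map_inj_in_uniq // => g1 g2.
  rewrite !mem_forests => /andP [/eqP H1 _] /andP [/eqP H2 _] [E1 E2].
  by rewrite -(cat_take_drop m g1) -(cat_take_drop m g2) E1 E2.
- move=> m x /mapP [g]; rewrite mem_forests => /andP [/eqP Hg _] ->.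
  by rewrite /= /root_deg /= size_take Hg ltn_neqAle leq_addl andbT; case: eqP.
Qed.

Definition nforests (n d : nat) : nat := size (forests n d).

Lemma nforests_small n d : n < d -> nforests n d = 0.
Proof.
move=> Hnd; rewrite /nforests; case Hfs: (forests n d) => [|f fs] //.
have := mem_forests n d f; rewrite Hfs mem_head => /esym/andP [/eqP Hs /eqP Ht].
by move: (size_le_forest_size f); rewrite Hs Ht leqNgt Hnd.
Qed.

Lemma nforestsSS n d : nforests n.+1 d.+1 = \sum_(m < n.+1) nforests n (d + m).
Proof.
rewrite /nforests forestsSS size_flatten /shape -map_comp sumnE big_map.
by rewrite -[RHS](big_mkord predT (fun m => nforests n (d + m))) /index_iota subn0;
  apply: eq_bigr => m _ /=; rewrite size_map.
Qed.

Lemma nforests_rec n d : nforests n.+1 d.+1 = nforests n d + nforests n.+1 d.+2.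
Proof.
rewrite !nforestsSS big_ord_recl addn0; congr (_ + _).
rewrite big_ord_recr /= nforests_small ?addn0; last by lia.
by apply: eq_bigr => m _; rewrite /bump /= add1n addSn addnS.
Qed.

Lemma nforests_diag n : nforests n n = 1.
Proof. by elim: n => // n IH; rewrite nforests_rec IH nforests_small. Qed.

Lemma nforests_closed_rec M e : 0 < e + M ->
  nforests (e + M) e * ((e + M)`! * M`!) = e * (e + M.*2).-1`!.
Proof.
elim: M e => [|M IHM] e.
  case: e => // e _; rewrite !addn0 nforests_diag fact0 muln1 mul1n.
  by rewrite factS.
elim: e => [|e IHe] _; first by rewrite add0n.
have -> : e.+1 + M.+1 = (e + M.+1).+1 by rewrite addSn.
rewrite nforests_rec; have := IHe ltac:(lia); have := IHM e.+2 ltac:(lia).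
rewrite (_ : e.+2 + M = (e + M.+1).+1); last by lia.
rewrite (_ : (e.+2 + M.*2).-1 = (e + M.+1.*2).-1); last by lia.
rewrite (_ : (e.+1 + M.+1.*2).-1 = (e + M.+1.*2).-1.+1); last by lia.
by rewrite !factS; nia.
Qed.

Lemma nforests_closed n d : 0 < n -> d <= n ->
  nforests n d * (n`! * (n - d)`!) = d * (2 * n - d - 1)`!.
Proof.
move=> Hn Hdn; have := @nforests_closed_rec (n - d) d.
by rewrite subnKC // (_ : (d + (n - d).*2).-1 = 2 * n - d - 1); [apply | lia].
Qed.

Lemma nforests_gt0 n d : 0 < d -> d <= n -> 0 < nforests n d.
Proof.
move=> Hd Hdn; have := nforests_closed (leq_trans Hd Hdn) Hdn.
have : 0 < d * (2 * n - d - 1)`! by rewrite muln_gt0 Hd fact_gt0.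
by move=> + Heq; rewrite -Heq muln_gt0 => /andP [].
Qed.

Lemma nforests_ffact_ratio n d a b : b <= a -> b <= d -> 2 * a < n - d ->
  nforests n d * n ^_ a * (n - d) ^_ (a - b) * (d - b) =
  d * (2 * n - d - 1) ^_ (2 * a - b) * nforests (n - a) (d - b).
Proof.
move=> Hba Hbd Hnd.
have H := nforests_closed (n := n) (d := d) ltac:(lia) ltac:(lia).
have H' := nforests_closed (n := n - a) (d := d - b) ltac:(lia) ltac:(lia).
have [Han Hab Hab2] : [/\ a <= n, a - b <= n - d & 2 * a - b <= 2 * n - d - 1].
  by split; lia.
rewrite -(ffact_fact Han) -(ffact_fact Hab) -(ffact_fact Hab2) in H.
rewrite (_ : n - d - (a - b) = n - a - (d - b)) in H; last by lia.
rewrite (_ : 2 * n - d - 1 - (2 * a - b) = 2 * (n - a) - (d - b) - 1) in H;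
  last by lia.
move: H H'.
set P1 := (n - a)`!; set P2 := (n - a - (d - b))`!; set A := (_ - _ - 1)`!.
set f1 := n ^_ a; set f2 := (n - d) ^_ (a - b); set f3 := _ ^_ (2 * a - b).
set x := nforests n d; set y := nforests (n - a) (d - b).
move=> H H'.
have HP : 0 < P1 * P2 by rewrite muln_gt0 !fact_gt0.
apply/eqP; rewrite -(eqn_pmul2r HP); apply/eqP.
have -> : x * f1 * f2 * (d - b) * (P1 * P2) = x * (f1 * P1 * (f2 * P2)) * (d - b)
  by nia.
have -> : d * f3 * y * (P1 * P2) = d * f3 * (y * (P1 * P2)) by nia.
by rewrite H H'; nia.
Qed.

Definition leaf : ptree := Node [::].

Definition insert_at (j : nat) (T : ptree) (f : seq ptree) : seq ptree :=
  take j f ++ T :: drop j f.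

Lemma insert_at_cat a b T : insert_at (size a) T (a ++ b) = a ++ T :: b.
Proof. by rewrite /insert_at take_size_cat // drop_size_cat. Qed.

Lemma insert_at_inj j T : {in [pred f | j <= size f] &, injective (insert_at j T)}.
Proof.
suff insK f : j <= size f ->
    take j (insert_at j T f) ++ drop j.+1 (insert_at j T f) = f.
  by move=> f1 f2 H1 H2 Heq; rewrite -(insK f1) // Heq insK.
have dropS_cat a b : drop (size a).+1 (a ++ T :: b) = b by elim: a => //= *; rewrite drop0.
move=> Hj; rewrite /insert_at -{1 4}(size_takel Hj) take_size_cat //.
by rewrite dropS_cat cat_take_drop.
Qed.

Lemma nth_insert_at j T f j' : j <= size f -> j' != j ->
  nth leaf (insert_at j T f) j' = nth leaf f (if j' < j then j' else j'.-1).
Proof.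
move=> Hj Hne; rewrite /insert_at nth_cat size_takel //.
case: ltnP => H; first by rewrite nth_take.
have H2 : j < j' by rewrite ltn_neqAle eq_sym Hne.
rewrite (_ : j' - j = (j' - j).-1.+1); last by lia.
by rewrite /= nth_drop; congr nth; lia.
Qed.

Lemma perm_forests_nth n d j T : j < d -> nverts T <= n ->
  perm_eq [seq g <- forests n d | nth leaf g j == T]
          [seq insert_at j T f | f <- forests (n - nverts T) d.-1].
Proof.
move=> Hj HT; apply: uniq_perm.
- exact/filter_uniq/uniq_forests.
- rewrite map_inj_in_uniq ?uniq_forests // => f1 f2.
  rewrite !mem_forests => /andP [/eqP H1 _] /andP [/eqP H2 _].
  by apply: insert_at_inj; rewrite inE ?H1 ?H2; lia.
move=> g; rewrite mem_filter; apply/idP/idP.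
- case/andP => /eqP Hg; rewrite mem_forests => /andP [/eqP Hs /eqP Ht].
  have Hjg : j < size g by rewrite Hs.
  have Hsplit : g = take j g ++ T :: drop j.+1 g by rewrite -Hg -drop_nth // cat_take_drop.
  have Hst : size (take j g) = j by rewrite size_take Hjg.
  apply/mapP; exists (take j g ++ drop j.+1 g); last by rewrite -{1}Hst insert_at_cat -Hsplit.
  rewrite mem_forests size_cat size_take Hjg size_drop Hs.
  move: Ht; rewrite {1}Hsplit !forest_size_cat forest_size_cons => <-.
  by apply/andP; split; apply/eqP; lia.
- case/mapP => f; rewrite mem_forests => /andP [/eqP Hs /eqP Ht] ->.
  have Hst : size (take j f) = j by rewrite size_takel // Hs; lia.
  rewrite /insert_at nth_cat Hst ltnn subnn eqxx /= mem_forests size_cat /=.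
  rewrite forest_size_cat forest_size_cons.
  have := congr1 size (cat_take_drop j f); have := congr1 forest_size (cat_take_drop j f).
  rewrite forest_size_cat size_cat Hs Ht Hst.
  move: (take j f) (drop j f) => a b H1 H2.
  rewrite addnS H2 prednK ?(leq_ltn_trans _ Hj) // eqxx /=.
  by rewrite addnCA H1 subnKC.
Qed.

Lemma count_forests_nth n d j T (Q : pred (seq ptree)) : j < d -> nverts T <= n ->
  count (fun g => (nth leaf g j == T) && Q g) (forests n d) =
  count (fun f => Q (insert_at j T f)) (forests (n - nverts T) d.-1).
Proof.
move=> Hj HT; rewrite (eq_count (a2 := predI Q (fun g => nth leaf g j == T))).
  by rewrite -count_filter (permP (perm_forests_nth Hj HT)) count_map.
by move=> g /=; rewrite andbC.
Qed.

Lemma count_forests_nth_eq n d j T : j < d -> nverts T <= n ->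
  count (fun g => nth leaf g j == T) (forests n d) = nforests (n - nverts T) d.-1.
Proof.
move=> Hj HT; rewrite /nforests -count_predT -(count_forests_nth predT Hj HT).
by apply: eq_count => g; rewrite /= andbT.
Qed.

Lemma count_forests_nth2 n d j j' T : j < d -> j' < d -> j' != j ->
  2 * nverts T <= n ->
  count (fun g => (nth leaf g j == T) && (nth leaf g j' == T)) (forests n d) =
  nforests (n - 2 * nverts T) (d - 2).
Proof.
move=> Hj Hj' Hne HT; rewrite count_forests_nth //; last by lia.
pose j'' := if j' < j then j' else j'.-1.
rewrite (@eq_in_count _ _ (fun f => nth leaf f j'' == T)); last first.
  move=> f; rewrite mem_forests => /andP [/eqP Hs _].
  by rewrite nth_insert_at // Hs; lia.
rewrite count_forests_nth_eq; first by congr nforests; lia.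
  by rewrite /j'' -!subn1; move/eqP: Hne => Hne; case: (ltnP j' j); lia.
by lia.
Qed.

Lemma sum_bool_count (I : Type) (P : pred I) s : \sum_(x <- s) (P x : nat) = count P s.
Proof. by rewrite -sumn_count sumnE big_map. Qed.

Lemma count_pred1_nth T g : count (pred1 T) g = \sum_(j < size g) (nth leaf g j == T).
Proof. by rewrite -sum_bool_count (big_nth leaf) big_mkord. Qed.

Lemma sum_count_forests n d T : 0 < d -> nverts T <= n ->
  \sum_(g <- forests n d) count (pred1 T) g = d * nforests (n - nverts T) (d - 1).
Proof.
move=> Hd HT; rewrite (eq_big_seq (fun g => \sum_(j < d) (nth leaf g j == T))).
  rewrite exchange_big /= (eq_bigr (fun _ => nforests (n - nverts T) (d - 1))).
    by rewrite sum_nat_const card_ord.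
  by move=> j _; rewrite sum_bool_count count_forests_nth_eq // subn1.
by move=> g; rewrite mem_forests count_pred1_nth => /andP [/eqP -> _].
Qed.

Lemma sum_count_sq_forests n d T : 1 < d -> 2 * nverts T <= n ->
  \sum_(g <- forests n d) count (pred1 T) g * count (pred1 T) g =
  d * nforests (n - nverts T) (d - 1) + d * (d - 1) * nforests (n - 2 * nverts T) (d - 2).
Proof.
move=> Hd HT.
rewrite (eq_big_seq (fun g => \sum_(j < d) \sum_(j' < d)
           ((nth leaf g j == T) && (nth leaf g j' == T) : nat))); last first.
  move=> g; rewrite mem_forests count_pred1_nth => /andP [/eqP -> _].
  rewrite big_distrl; apply: eq_bigr => j _.
  by rewrite big_distrr; apply: eq_bigr => j' _; rewrite /= mulnb.
rewrite exchange_big /= (eq_bigr (fun j => nforests (n - nverts T) (d - 1) +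
    (d - 1) * nforests (n - 2 * nverts T) (d - 2))).
  by rewrite sum_nat_const card_ord mulnDr mulnA.
move=> j _; rewrite exchange_big (bigD1 j) //= sum_bool_count.
rewrite (eq_count (a2 := fun g => nth leaf g j == T)); last by move=> g; rewrite andbb.
rewrite count_forests_nth_eq // -?subn1; last by lia.
congr (_ + _); rewrite (eq_bigr (fun _ => nforests (n - 2 * nverts T) (d - 2))).
  by rewrite sum_nat_const cardC1 card_ord subn1.
move=> j' Hj'; rewrite sum_bool_count count_forests_nth2 //; lia.
Qed.

Lemma perm_trees_forests n d s : uniq s ->
  (forall t, (t \in s) = (nverts t == n.+1) && (root_deg t == d)) ->
  perm_eq s (map Node (forests n d)).
Proof.
move=> Hu Hs; apply: uniq_perm => //.
  by rewrite map_inj_uniq ?uniq_forests // => f1 f2 [].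
by move=> [f]; rewrite Hs mem_map ?mem_forests 1?andbC // => f1 f2 [].
Qed.

Lemma size_trees_forests n d s : uniq s ->
  (forall t, (t \in s) = (nverts t == n.+1) && (root_deg t == d)) ->
  size s = nforests n d.
Proof. by move=> Hu Hs; rewrite (perm_size (perm_trees_forests Hu Hs)) size_map. Qed.

Local Open Scope R_scope.

Lemma sum_sq_dev (Y : ptree -> nat) D mu s :
  \big[Rplus/0]_(t <- s) (INR (Y t) * D - mu) ^ 2 =
  D ^ 2 * INR (\sum_(t <- s) Y t * Y t) - 2 * mu * D * INR (\sum_(t <- s) Y t)
  + mu ^ 2 * INR (size s).
Proof.
elim: s => [|t s IH]; first by rewrite !big_nil /=; ring.
by rewrite !big_cons IH !plus_INR mult_INR (_ : size (t :: s) = (size s).+1) // S_INR; ring.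
Qed.

Lemma chebyshev_count (g : ptree -> R) eps s : 0 < eps ->
  INR (count (fun t => ~~ Rleb (Rabs (g t)) eps) s) * eps ^ 2
    <= \big[Rplus/0]_(t <- s) g t ^ 2.
Proof.
move=> Heps; elim: s => [|t s IH]; first by rewrite big_nil /=; lra.
rewrite big_cons /= plus_INR Rmult_plus_distr_r; apply: Rplus_le_compat => //.
rewrite /Rleb; case: Rle_dec => [_ | Hfar] /=; first by rewrite Rmult_0_l; apply: pow2_ge_0.
rewrite Rmult_1_l; have := pow_incr eps (Rabs (g t)) 2 ltac:(lra).
by rewrite pow2_abs /=; lra.
Qed.

Lemma count_near_gt (g : ptree -> R) eps s : 0 < eps ->
  \big[Rplus/0]_(t <- s) g t ^ 2 < eps ^ 3 * INR (size s) ->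
  INR (count (fun t => Rleb (Rabs (g t)) eps) s) > (1 - eps) * INR (size s).
Proof.
move=> Heps Hsum; have Hcheb := chebyshev_count g s Heps.
have Hfar : INR (count (fun t => ~~ Rleb (Rabs (g t)) eps) s) < eps * INR (size s).
  apply: (Rmult_lt_reg_r (eps ^ 2)); first exact: pow_lt.
  have -> : eps * INR (size s) * eps ^ 2 = eps ^ 3 * INR (size s) by ring.
  lra.
have Hsplit : (count (fun t => Rleb (Rabs (g t)) eps) s +
    count (fun t => ~~ Rleb (Rabs (g t)) eps) s = size s)%nat.
  by rewrite -(count_predC (fun t => Rleb (Rabs (g t)) eps)).
by move/(congr1 INR): Hsplit; rewrite plus_INR; lra.
Qed.

(* The average of (X/d - mu)^2 over [forests n d], X counting the trees equal
   to a given tree with i vertices, written with the two moments of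
   [sum_count_forests] and [sum_count_sq_forests]. *)
Definition mean_sq_dev (n d i : nat) (mu : R) : R :=
  let r1 := INR (nforests (n - i) (d - 1)) / INR (nforests n d) in
  let r2 := INR (nforests (n - 2 * i) (d - 2)) / INR (nforests n d) in
  r2 * (INR (d - 1) / INR d) + r1 / INR d - 2 * mu * r1 + mu ^ 2.

Lemma sum_sq_beta_dev n d T mu s : (1 < d)%nat -> (2 * nverts T <= n)%nat ->
  (d <= n)%nat -> uniq s ->
  (forall t, (t \in s) = (nverts t == n.+1) && (root_deg t == d)) ->
  \big[Rplus/0]_(t <- s) (beta d T t - mu) ^ 2 =
  INR (size s) * mean_sq_dev n d (nverts T) mu.
Proof.
move=> Hd HT Hdn Hu Hs.
have sum_trees (h : seq ptree -> nat) :
    \sum_(t <- s) h (children t) = \sum_(g <- forests n d) h g.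
  by rewrite (perm_big _ (perm_trees_forests Hu Hs)) big_map.
have HNpos : 0 < INR (nforests n d) by apply/lt_0_INR/ltP/nforests_gt0; lia.
have Hdpos : 0 < INR d by apply/lt_0_INR/ltP; lia.
rewrite (sum_sq_dev (fun t => count (pred1 T) (children t)) (/ INR d)).
rewrite (sum_trees (fun g => count (pred1 T) g * count (pred1 T) g)%nat).
rewrite (sum_trees (count (pred1 T))) sum_count_forests ?sum_count_sq_forests; try lia.
rewrite (size_trees_forests Hu Hs) /mean_sq_dev !plus_INR !mult_INR; field; lra.
Qed.

Definition approx_lin (u : nat -> nat) (c : R) : Prop :=
  exists B : R, exists K : nat, forall k : nat, (K <= k)%nat ->
    Rabs (INR (u k) - c * INR k) <= B.

Lemma lim_inv_INR : is_lim_seq (fun k => / INR k) 0.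
Proof. exact: (is_lim_seq_inv _ _ is_lim_seq_INR). Qed.

Lemma lim_approx_lin u c : approx_lin u c -> is_lim_seq (fun k => INR (u k) / INR k) c.
Proof.
move=> [B [K HB]].
apply: (is_lim_seq_le_le_loc (fun k => c - B * / INR k) _ (fun k => c + B * / INR k)).
- exists K.+1 => k Hk; have Hk0 : 0 < INR k by apply/lt_0_INR/ltP; lia.
  have /Rabs_le_between [H1 H2] := HB k ltac:(lia).
  have Hdiv : INR (u k) / INR k = c + (INR (u k) - c * INR k) * / INR k.
    by field; lra.
  have Hinv : 0 < / INR k by apply: Rinv_0_lt_compat.
  by rewrite Hdiv; split; nra.
- have := is_lim_seq_minus' _ _ _ _ (is_lim_seq_const c) (is_lim_seq_scal_l _ B _ lim_inv_INR).
  by rewrite Rmult_0_r Rminus_0_r.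
- have := is_lim_seq_plus' _ _ _ _ (is_lim_seq_const c) (is_lim_seq_scal_l _ B _ lim_inv_INR).
  by rewrite Rmult_0_r Rplus_0_r.
Qed.

Lemma INR_subn a b : INR (a - b) = if (b <= a)%nat then INR a - INR b else 0.
Proof.
case: leqP => H; first by rewrite minus_INR //; apply/leP.
by rewrite (_ : (a - b)%nat = 0%nat) //; lia.
Qed.

Lemma approx_lin_subc m u c : approx_lin u c -> approx_lin (fun k => u k - m)%nat c.
Proof.
move=> [B [K HB]]; exists (B + INR m), K => k Hk.
have /Rabs_le_between [H1 H2] := HB k Hk.
have Hu0 := pos_INR (u k); have Hm0 := pos_INR m.
rewrite INR_subn; case: leqP => H; apply: Rabs_le; first lra.
have : INR (u k) < INR m by apply/lt_INR/ltP.
lra.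
Qed.

Lemma approx_lin_muln m u c : approx_lin u c -> approx_lin (fun k => m * u k)%nat (INR m * c).
Proof.
move=> [B [K HB]]; exists (INR m * B), K => k Hk.
rewrite mult_INR (_ : _ - _ = INR m * (INR (u k) - c * INR k)); last by ring.
rewrite Rabs_mult Rabs_pos_eq; last exact: pos_INR.
by apply: Rmult_le_compat_l; [exact: pos_INR | exact: HB].
Qed.

Lemma approx_lin_large u c : approx_lin u c -> 0 < c -> forall M : nat,
  exists K : nat, forall k, (K <= k)%nat -> (M <= u k)%nat.
Proof.
move=> [B [K HB]] Hc M; have [K' HK'] := INR_unbounded ((B + INR M) / c).
exists (maxn K K') => k Hk; have /Rabs_le_between [H1 _] := HB k ltac:(lia).
have HkK : INR K' <= INR k by apply/le_INR/leP; lia.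
have : (B + INR M) / c * c < INR k * c by apply: Rmult_lt_compat_r; lra.
rewrite /Rdiv Rmult_assoc Rinv_l; last lra.
by move=> ?; apply/leP/INR_le; lra.
Qed.

Lemma approx_lin_sub u v c1 c2 : approx_lin u c1 -> approx_lin v c2 -> c2 < c1 ->
  approx_lin (fun k => u k - v k)%nat (c1 - c2).
Proof.
move=> [B1 [K1 H1]] [B2 [K2 H2]] Hc.
have [K3 HK3] := INR_unbounded ((B1 + B2) / (c1 - c2)).
exists (B1 + B2), (maxn K1 (maxn K2 K3)) => k Hk.
have /Rabs_le_between [H11 H12] := H1 k ltac:(lia).
have /Rabs_le_between [H21 H22] := H2 k ltac:(lia).
have Hk3 : INR K3 <= INR k by apply/le_INR/leP; lia.
have Hbig : B1 + B2 < (c1 - c2) * INR k.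
  have : (B1 + B2) / (c1 - c2) * (c1 - c2) < INR k * (c1 - c2)
    by apply: Rmult_lt_compat_r; lra.
  rewrite /Rdiv Rmult_assoc Rinv_l; lra.
have Hle : (v k <= u k)%nat by apply/leP/INR_le; lra.
by rewrite INR_subn Hle; apply: Rabs_le; lra.
Qed.

Lemma approx_lin_ceil c : 0 <= c -> approx_lin (fun k => Z.to_nat (Rceil (c * INR k))) c.
Proof.
move=> Hc; exists 1, 0%nat => k _.
have [H1 H2] := archimed (- (c * INR k)).
have Hx : 0 <= c * INR k by apply/Rmult_le_pos/pos_INR.
have HR : IZR (Rceil (c * INR k)) = 1 - IZR (up (- (c * INR k))).
  by rewrite /Rceil /Int_part opp_IZR minus_IZR; ring.
have Hz : (0 <= Rceil (c * INR k))%Z by apply: le_IZR; rewrite HR; lra.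
rewrite INR_IZR_INZ Z2Nat.id // HR; apply: Rabs_le; lra.
Qed.

Lemma lim_ffact_approx_lin u c m : approx_lin u c ->
  is_lim_seq (fun k => INR (u k ^_ m) / INR k ^ m) (c ^ m).
Proof.
move=> Hu; elim: m => [|m IH].
  apply: (is_lim_seq_ext (fun _ => 1)); last exact: is_lim_seq_const.
  by move=> k; rewrite ffactn0 /= /Rdiv Rinv_1 Rmult_1_r.
have := is_lim_seq_mult' _ _ _ _ IH (lim_approx_lin (approx_lin_subc m Hu)).
rewrite (_ : c ^ m * c = c ^ m.+1); last by rewrite /= Rmult_comm.
apply: is_lim_seq_ext => k.
by rewrite ffactnSr mult_INR /= /Rdiv Rinv_mult; ring.
Qed.

Lemma nforests_ratioR n d a b : (b <= a)%nat -> (b < d)%nat -> (2 * a < n - d)%nat ->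
  INR (nforests (n - a) (d - b)) / INR (nforests n d) =
  INR (n ^_ a) * INR ((n - d) ^_ (a - b)) * INR (d - b) /
    (INR d * INR ((2 * n - d - 1) ^_ (2 * a - b))).
Proof.
move=> Hba Hbd Hnd.
have /(congr1 INR) := @nforests_ffact_ratio n d a b Hba ltac:(lia) Hnd.
rewrite !mult_INR => Heq.
have HN : 0 < INR (nforests n d) by apply/lt_0_INR/ltP/nforests_gt0; lia.
have Hd : 0 < INR d by apply/lt_0_INR/ltP; lia.
have Hf : 0 < INR ((2 * n - d - 1) ^_ (2 * a - b)).
  by apply/lt_0_INR/ltP; rewrite ffact_gt0; lia.
apply: (Rmult_eq_reg_r (INR (nforests n d) * (INR d * INR ((2 * n - d - 1) ^_ (2 * a - b))))).
  by field_simplify; lra.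
by apply: Rmult_integral_contrapositive; split; [lra | nra].
Qed.

Lemma lim_nforests_ratio (n d : nat -> nat) c delta a b :
  approx_lin n c -> approx_lin d (delta * c) -> 0 < c -> 0 < delta < 1 -> (b <= a)%nat ->
  is_lim_seq (fun k => INR (nforests (n k - a) (d k - b)) / INR (nforests (n k) (d k)))
    ((1 - delta) ^ (a - b) / (2 - delta) ^ (2 * a - b)).
Proof.
move=> Hn Hd Hc Hdelta Hba.
have Hdc : 0 < delta * c by apply: Rmult_lt_0_compat; lra.
have Hnd := approx_lin_sub Hn Hd ltac:(nra).
have H2nd : approx_lin (fun k => 2 * n k - d k - 1)%nat (2 * c - delta * c).
  apply/approx_lin_subc/approx_lin_sub; last by nra.
    by rewrite (_ : 2 * c = INR 2 * c); [exact: approx_lin_muln | rewrite /=; ring].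
  exact: Hd.
have [K1 HK1] := approx_lin_large Hd Hdc b.+1.
have [K2 HK2] := approx_lin_large Hnd ltac:(nra) (2 * a).+1.
have Hpow k : INR k ^ (2 * a - b) = INR k ^ a * INR k ^ (a - b).
  by rewrite -pow_add; congr pow; lia.
apply: (is_lim_seq_ext_loc
  (fun k => INR (n k ^_ a) / INR k ^ a * (INR ((n k - d k) ^_ (a - b)) / INR k ^ (a - b))
            * (INR (d k - b) / INR k)
            / (INR (d k) / INR k * (INR ((2 * n k - d k - 1) ^_ (2 * a - b)) / INR k ^ (2 * a - b))))).
  exists (maxn 1 (maxn K1 K2)) => k Hk.
  have Hk0 : 0 < INR k by apply/lt_0_INR/ltP; lia.
  have Hdk := HK1 k ltac:(lia); have Hndk := HK2 k ltac:(lia).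
  have Hd0 : 0 < INR (d k) by apply/lt_0_INR/ltP; lia.
  have Hf : 0 < INR ((2 * n k - d k - 1) ^_ (2 * a - b)).
    by apply/lt_0_INR/ltP; rewrite ffact_gt0; lia.
  rewrite nforests_ratioR ?Hpow; [ | lia | lia | lia].
  field; repeat split; try apply: pow_nonzero; lra.
have -> : (1 - delta) ^ (a - b) / (2 - delta) ^ (2 * a - b) =
  c ^ a * (c - delta * c) ^ (a - b) * (delta * c) / (delta * c * (2 * c - delta * c) ^ (2 * a - b)).
  rewrite (_ : c - delta * c = (1 - delta) * c); last by ring.
  rewrite (_ : 2 * c - delta * c = (2 - delta) * c); last by ring.
  rewrite !Rpow_mult_distr (_ : (2 * a - b)%nat = (a + (a - b))%nat); last by lia.
  by rewrite !pow_add; field; repeat split; try apply: pow_nonzero; lra.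
apply: is_lim_seq_div'.
- apply: is_lim_seq_mult'; last exact/lim_approx_lin/approx_lin_subc.
  by apply: is_lim_seq_mult'; exact: lim_ffact_approx_lin.
- by apply: is_lim_seq_mult'; [exact: lim_approx_lin | exact: lim_ffact_approx_lin].
- by apply: Rmult_integral_contrapositive; split; [lra | apply: pow_nonzero; nra].
Qed.

Lemma lim_mean_sq_dev (n d : nat -> nat) c delta i :
  approx_lin n c -> approx_lin d (delta * c) -> 0 < c -> 0 < delta < 1 -> (1 <= i)%nat ->
  is_lim_seq (fun k => mean_sq_dev (n k) (d k) i (mu_beta delta i)) 0.
Proof.
move=> Hn Hd Hc Hdelta Hi; set mu := mu_beta delta i.
have L1 : is_lim_seq (fun k => INR (nforests (n k - i) (d k - 1)) / INR (nforests (n k) (d k))) mu.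
  exact: (lim_nforests_ratio (a := i) (b := 1) Hn Hd Hc Hdelta Hi).
have L2 : is_lim_seq (fun k => INR (nforests (n k - 2 * i) (d k - 2)) / INR (nforests (n k) (d k)))
    (mu ^ 2).
  have -> : mu ^ 2 = (1 - delta) ^ (2 * i - 2) / (2 - delta) ^ (2 * (2 * i) - 2).
    rewrite /mu /mu_beta (_ : (2 * i - 2)%nat = ((i - 1) * 2)%nat); last by lia.
    rewrite (_ : (2 * (2 * i) - 2)%nat = ((2 * i - 1) * 2)%nat); last by lia.
    by rewrite !pow_mult /Rdiv Rpow_mult_distr pow_inv.
  exact: (lim_nforests_ratio (a := 2 * i) (b := 2) Hn Hd Hc Hdelta ltac:(lia)).
have [K HK] := approx_lin_large Hd ltac:(nra) 1.
have Ldinv : is_lim_seq (fun k => / INR (d k)) 0.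
  have := is_lim_seq_div' _ _ _ _ lim_inv_INR (lim_approx_lin Hd) ltac:(nra).
  rewrite /Rdiv Rmult_0_l; apply: is_lim_seq_ext_loc; exists (maxn 1 K) => k Hk.
  have Hk0 : 0 < INR k by apply/lt_0_INR/ltP; lia.
  have Hd0 : 0 < INR (d k) by apply/lt_0_INR/ltP; have := HK k ltac:(lia); lia.
  by field; lra.
have Ld1 : is_lim_seq (fun k => INR (d k - 1) / INR (d k)) 1.
  have := is_lim_seq_minus' _ _ _ _ (is_lim_seq_const 1) Ldinv.
  rewrite Rminus_0_r; apply: is_lim_seq_ext_loc; exists K => k Hk.
  have Hd1 := HK k ltac:(lia); have Hd0 : 0 < INR (d k) by apply/lt_0_INR/ltP.
  by rewrite INR_subn Hd1 /=; field; lra.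
rewrite (_ : 0 = mu ^ 2 * 1 + mu * 0 - 2 * mu * mu + mu ^ 2); last by ring.
have := (is_lim_seq_plus' _ _ _ _ (is_lim_seq_minus' _ _ _ _
  (is_lim_seq_plus' _ _ _ _ (is_lim_seq_mult' _ _ _ _ L2 Ld1) (is_lim_seq_mult' _ _ _ _ L1 Ldinv))
  (is_lim_seq_scal_l _ (2 * mu) _ L1)) (is_lim_seq_const (mu ^ 2))).
by apply: is_lim_seq_ext => k; rewrite /mean_sq_dev /Rdiv.
Qed.

Theorem proposition5 (lambda delta : R) (i : nat) (T : ptree) :
  0 < lambda -> 0 < delta < 1 -> (1 <= i)%nat -> nverts T = i ->
  forall eps : R, 0 < eps ->
  exists K : nat, forall k : nat, (K <= k)%nat ->
    forall s : seq ptree, uniq s ->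
    (forall t : ptree, (t \in s) =
        (nverts t == ell_of lambda k) && (root_deg t == deg_of lambda delta k)) ->
    INR (count (fun t => Rleb (Rabs (beta (deg_of lambda delta k) T t
                                     - mu_beta delta i)) eps) s)
      > (1 - eps) * INR (size s).
Proof.
move=> Hlam Hdelta Hi HT eps Heps.
pose n k := (ell_of lambda k - 1)%nat; pose d k := deg_of lambda delta k.
have Hell : approx_lin (ell_of lambda) lambda by apply/approx_lin_ceil/Rlt_le.
have Hn : approx_lin n lambda := approx_lin_subc 1 Hell.
have Hd : approx_lin d (delta * lambda) by apply/approx_lin_ceil/Rlt_le; nra.
have [K1 HK1] : exists K, forall k, (K <= k)%nat ->
    mean_sq_dev (n k) (d k) i (mu_beta delta i) < eps ^ 3.
  have [K HK] := proj2 (is_lim_seq_spec _ _) (lim_mean_sq_dev Hn Hd Hlam Hdelta Hi)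
    (mkposreal _ (pow_lt _ 3 Heps)).
  by exists K => k /leP /HK /Rabs_lt_between /=; rewrite Rminus_0_r; lra.
have [K2 HK2] := approx_lin_large Hd ltac:(nra) 2.
have [K3 HK3] := approx_lin_large (approx_lin_sub Hn Hd ltac:(nra)) ltac:(nra) (2 * i).
exists (maxn K1 (maxn K2 K3)) => k Hk s Hu Hs.
have Hdk := HK2 k ltac:(lia); have Hndk := HK3 k ltac:(lia).
have Hell_k : ell_of lambda k = (n k).+1 by move: Hndk; rewrite /n; lia.
have Hs' t : (t \in s) = (nverts t == (n k).+1) && (root_deg t == d k).
  by rewrite Hs Hell_k.
apply: count_near_gt => //.
rewrite (sum_sq_beta_dev _ _ _ _ Hu Hs') ?HT; try lia.
rewrite (Rmult_comm (eps ^ 3)); apply: Rmult_lt_compat_l; last by apply: HK1; lia.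
by rewrite (size_trees_forests Hu Hs'); apply/lt_0_INR/ltP/nforests_gt0; lia.
Qed.
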